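(* Under the hypotheses of Lemma 3 (namely: $\mathscr{A}=\{A_1,\ldots,A_r\}$ an irreducible set of real $d\times d$ matrices, $\|\cdot\|$ a norm on $\mathbb{R}^d$, integers $p\ge d-1$, $n\ge1$, a number $\mu>1$, matrices $A_{i_1},\ldots,A_{i_n}\in\mathscr{A}$ and nonzero $x_*\in\mathbb{R}^d$ with $\|A_{i_n}\cdots A_{i_1}x_*\|\ge \mu\,\eta_p(\mathscr{A})\,\rho(\mathscr{A})^n\|x_*\|$, where $\eta_p(\mathscr{A})=\max\{1,\rho(\mathscr{A})^p\}/\chi_p(\mathscr{A})$), and with $\eta=\mu^{1/(n+p)}$, there exists a sequence $H_k\in\mathscr{A}_\infty$, $k=0,1,\ldots$, such that $\mathrm{len}(H_k)\to\infty$ as $k\to\infty$ and \[ \|H_k\|\ge\big(\eta\,\rho(\mathscr{A})\big)^{\mathrm{len}(H_k)},\qquad k=0,1,\ldots. \]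
   Context: Irreducible: the matrices in $\mathscr{A}$ have no common invariant subspace other than $\{0\}$ and $\mathbb{R}^d$. $\mathscr{A}^k$ is the set of products of $k$ matrices from $\mathscr{A}$, $\mathscr{A}^0=\{I\}$; matrices carry the induced operator norm, $\|\mathscr{A}^n\|=\max_{A\in\mathscr{A}^n}\|A\|$, and $\rho(\mathscr{A})=\limsup_{n\to\infty}\|\mathscr{A}^n\|^{1/n}$. $\mathscr{A}_\infty=\bigcup_{k\ge1}\mathscr{A}^k$, elements regarded as products of factors from $\mathscr{A}$ whose number of factors is the length $\mathrm{len}$. $\mathscr{A}_p=\bigcup_{k=0}^p\mathscr{A}^k$, $\mathscr{A}_p(x)=\{Ax:A\in\mathscr{A}_p\}$, $\mathbf{S}(t)$ the closed $\|\cdot\|$-ball of radius $t$ about $0$, and $\chi_p(\mathscr{A})=\inf_{\|x\|=1}\sup\{t\ge0:\mathbf{S}(t)\subseteq\mathrm{conv}(\mathscr{A}_p(x)\cup\mathscr{A}_p(-x))\}$ is the $p$-measure of irreducibility. *)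

From Stdlib Require Import Reals Lra ClassicalEpsilon List.
From mathcomp Require Import ssreflect ssrfun ssrbool eqtype ssrnat seq fintype bigop.
Set Implicit Arguments. Unset Strict Implicit.

Open Scope R_scope.

Definition Vec (d : nat) := 'I_d -> R.
Definition Mat (d : nat) := 'I_d -> 'I_d -> R.

Definition vzero d : Vec d := fun _ => 0.
Arguments vzero d _ : clear implicits.
Definition vadd d (x y : Vec d) : Vec d := fun i => x i + y i.
Definition vscale d (c : R) (x : Vec d) : Vec d := fun i => c * x i.
Definition vopp d (x : Vec d) : Vec d := fun i => - x i.

Definition mv d (A : Mat d) (x : Vec d) : Vec d :=
  fun i => \big[Rplus/0]_(j < d) (A i j * x j).

Definition is_norm d (N : Vec d -> R) : Prop :=
  (forall x, 0 <= N x) /\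
  (forall x, N x = 0 -> x = vzero d) /\
  (forall c x, N (vscale c x) = Rabs c * N x) /\
  (forall x y, N (vadd x y) <= N x + N y).

(* supremum / infimum of a set of reals (meaningful when the lub exists) *)
Definition Rsup (E : R -> Prop) : R := epsilon (inhabits 0) (fun m => is_lub E m).
Definition Rinf (E : R -> Prop) : R := - Rsup (fun y => E (- y)).

Definition opnorm d (N : Vec d -> R) (f : Vec d -> Vec d) : R :=
  Rsup (fun y => exists x, N x = 1 /\ y = N (f x)).

(* a family A = {A_0,...,A_{r-1}}; a word w = [i_1; ...; i_n] denotes the
   product A_{i_n} ... A_{i_1} (i_1 acts first); its length is len = length w *)
Fixpoint act d r (A : 'I_r -> Mat d) (w : list 'I_r) (x : Vec d) : Vec d :=
  match w with
  | nil => x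
  | i :: w' => act A w' (mv (A i) x)
  end.

Definition normpow d r (N : Vec d -> R) (A : 'I_r -> Mat d) (n : nat) : R :=
  Rsup (fun y => exists w : list 'I_r, length w = n /\ y = opnorm N (act A w)).

Definition nroot (n : nat) (x : R) : R :=
  if Rle_dec x 0 then 0 else Rpower x (/ INR n).

Definition jsr d r (N : Vec d -> R) (A : 'I_r -> Mat d) : R :=
  Rinf (fun z => exists m : nat,
    z = Rsup (fun y => exists n : nat, (m <= n)%nat /\ (1 <= n)%nat /\
                                       y = nroot n (normpow N A n))).

Definition subspace d (V : Vec d -> Prop) : Prop :=
  V (vzero d) /\ (forall x y, V x -> V y -> V (vadd x y)) /\
  (forall c x, V x -> V (vscale c x)).

Definition irreducible d r (A : 'I_r -> Mat d) : Prop :=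
  forall V : Vec d -> Prop, subspace V ->
    (forall i x, V x -> V (mv (A i) x)) ->
    (forall x, V x <-> x = vzero d) \/ (forall x, V x).

Definition Ap_img d r (A : 'I_r -> Mat d) (p : nat) (x : Vec d) : Vec d -> Prop :=
  fun y => exists w : list 'I_r, (length w <= p)%nat /\ y = act A w x.

Fixpoint wsum d (l : list (R * Vec d)) : Vec d :=
  match l with
  | nil => vzero d
  | (c, v) :: l' => vadd (vscale c v) (wsum l')
  end.

Definition conv d (S : Vec d -> Prop) : Vec d -> Prop :=
  fun y => exists l : list (R * Vec d),
    (forall cv, In cv l -> 0 <= fst cv /\ S (snd cv)) /\
    fold_right Rplus 0 (map fst l) = 1 /\ y = wsum l.

Definition ball d (N : Vec d -> R) (t : R) : Vec d -> Prop := fun y => N y <= t.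

Definition chi d r (N : Vec d -> R) (A : 'I_r -> Mat d) (p : nat) : R :=
  Rinf (fun z => exists x, N x = 1 /\
    z = Rsup (fun t => 0 <= t /\
           (forall y, ball N t y ->
              conv (fun v => Ap_img A p x v \/ Ap_img A p (vopp x) v) y))).

Definition eta_p d r (N : Vec d -> R) (A : 'I_r -> Mat d) (p : nat) : R :=
  Rmax 1 (jsr N A ^ p) / chi N A p.

(* Write rho for the joint spectral radius, c = chi_p(A) > 0, eta = mu^(1/(n+p)).
   Main step (one_step): every x <> 0 is amplified by some nonempty word F with
   ||F x|| >= (eta rho)^|F| ||x||.  For the unit vector u = x/||x||, the
   rescaled hypothesis vector y = (c/||x*||) x* has norm c <= sup{t : S(t) is
   inside conv(A_p(u) u A_p(-u))}, and since the convex hull of finitely many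
   points is closed, y itself lies in that hull.  The word w of the hypothesis
   maps y to a convex combination of the points +-w G u (|G| <= p), so one of
   them has norm >= ||w y|| >= mu max(1, rho^p) rho^n >= (eta rho)^(|G|+n),
   using eta^(n+p) = mu.  Iterating the step from x* gives words H_k of
   strictly increasing length with ||H_k x*|| >= (eta rho)^|H_k| ||x*||
   (growing_of_step); when rho <= 0 any words of odd length do.

   The analytic input is chi_p(A) > 0 (chi_bounds).  Irreducibility and
   p >= d - 1 make the Krylov vectors G x, |G| <= p, span R^d (krylov_full);
   this persists with bounded coefficients for y near x (krylov_local_solve),
   so the hulls contain balls of a locally uniform radius (radius_near), and
   compactness of the unit sphere makes the radius uniform (radii_lower). *)

From Stdlib Require Import Reals Lra List ClassicalEpsilon FunctionalExtensionality.
From mathcomp Require Import all_boot all_algebra.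
From mathcomp Require Import Rstruct.
Set Implicit Arguments. Unset Strict Implicit.

Local Open Scope R_scope.

Lemma sum_le (I : Type) (s : seq I) (P : pred I) (f g : I -> R) :
  (forall i, P i -> f i <= g i) ->
  \big[Rplus/0]_(i <- s | P i) f i <= \big[Rplus/0]_(i <- s | P i) g i.
Proof. by move=> h; apply: (big_ind2 (fun a b => a <= b)) => //; [lra | move=> *; lra]. Qed.

Lemma sum_ge0 (I : Type) (s : seq I) (P : pred I) (f : I -> R) :
  (forall i, P i -> 0 <= f i) -> 0 <= \big[Rplus/0]_(i <- s | P i) f i.
Proof. by move=> h; apply: (big_ind (fun a => 0 <= a)) => //; [lra | move=> *; lra]. Qed.

Lemma sum_abs (I : Type) (s : seq I) (P : pred I) (f : I -> R) :
  Rabs (\big[Rplus/0]_(i <- s | P i) f i) <= \big[Rplus/0]_(i <- s | P i) Rabs (f i).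
Proof.
apply: (big_ind2 (fun a b => Rabs a <= b)) => [|a b c e h1 h2|i _]; last lra.
  by rewrite Rabs_R0; lra.
by apply: Rle_trans (Rabs_triang _ _) _; lra.
Qed.

Lemma sum_le_term (I : eqType) (s : seq I) (f : I -> R) i :
  uniq s -> i \in s -> (forall j, 0 <= f j) -> f i <= \big[Rplus/0]_(j <- s) f j.
Proof.
move=> us si f0; rewrite (bigD1_seq i) //=.
by have := @sum_ge0 _ s (fun j => j != i) f (fun j _ => f0 j); lra.
Qed.

Lemma sum_le_term_fin (I : finType) (f : I -> R) i :
  (forall j, 0 <= f j) -> f i <= \big[Rplus/0]_j f j.
Proof. by apply: sum_le_term; [exact: index_enum_uniq | exact: mem_index_enum]. Qed.

Lemma Rsup_lub (E : R -> Prop) :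
  (exists x, E x) -> (exists M, forall x, E x -> x <= M) -> is_lub E (Rsup E).
Proof.
move=> [x hx] [M hM]; rewrite /Rsup; apply: epsilon_spec.
have [m hm] := completeness E (ex_intro _ M hM) (ex_intro _ x hx); by exists m.
Qed.

Lemma Rsup_ge (E : R -> Prop) x :
  (exists M, forall x, E x -> x <= M) -> E x -> x <= Rsup E.
Proof. by move=> hb hx; have [h _] := Rsup_lub (ex_intro _ x hx) hb; apply: h. Qed.

Lemma Rsup_le (E : R -> Prop) M :
  (exists x, E x) -> (forall x, E x -> x <= M) -> Rsup E <= M.
Proof. by move=> hn hb; have [_ h] := Rsup_lub hn (ex_intro _ M hb); apply: h. Qed.

Lemma Rinf_le (E : R -> Prop) x :
  (exists m, forall x, E x -> m <= x) -> E x -> Rinf E <= x.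
Proof.
move=> [m hm] hx; rewrite /Rinf; suff : - x <= Rsup (fun y => E (- y)) by lra.
apply: Rsup_ge; last by rewrite Ropp_involutive.
by exists (- m) => y hy; have := hm _ hy; lra.
Qed.

Lemma Rinf_ge (E : R -> Prop) m :
  (exists x, E x) -> (forall x, E x -> m <= x) -> m <= Rinf E.
Proof.
move=> [x hx] hm; rewrite /Rinf; suff : Rsup (fun y => E (- y)) <= - m by lra.
apply: Rsup_le; first by exists (- x); rewrite Ropp_involutive.
by move=> y hy; have := hm _ hy; lra.
Qed.

Lemma inv_pos k : 0 < / INR k.+1.
Proof. by apply: Rinv_0_lt_compat; apply: lt_0_INR; apply/ltP. Qed.

Lemma inv_small eps : 0 < eps -> exists K, forall k, (K <= k)%nat -> / INR k.+1 < eps.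
Proof.
move=> he; have [K [hK hK0]] := archimed_cor1 _ he; exists K => k hk.
apply: Rle_lt_trans hK; apply: Rinv_le_contravar; first exact: lt_0_INR.
by apply: le_INR; apply/leP; apply: leq_trans hk _.
Qed.

Lemma cv_inv : Un_cv (fun k => / INR k.+1) 0.
Proof.
move=> eps he; have [K hK] := inv_small he; exists K => k hk.
rewrite /R_dist Rminus_0_r Rabs_right; first by apply: hK; apply/leP.
by apply: Rle_ge; apply: Rlt_le; apply: inv_pos.
Qed.

Lemma cv_const c : Un_cv (fun _ => c) c.
Proof. by move=> eps he; exists 0%nat => k _; rewrite /R_dist Rminus_diag Rabs_R0. Qed.

Lemma cv_ext (u v : nat -> R) l : (forall k, u k = v k) -> Un_cv u l -> Un_cv v l.
Proof. by move=> e h eps he; have [K hK] := h eps he; exists K => k hk; rewrite -e; apply: hK. Qed.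

Lemma cv_sum (I : eqType) (s : seq I) (f : nat -> I -> R) (g : I -> R) :
  (forall i, i \in s -> Un_cv (fun k => f k i) (g i)) ->
  Un_cv (fun k => \big[Rplus/0]_(i <- s) f k i) (\big[Rplus/0]_(i <- s) g i).
Proof.
elim: s => [|a s IH] h.
  by rewrite big_nil; apply: (cv_ext (u := fun _ => 0)) (cv_const 0) => k; rewrite big_nil.
rewrite big_cons; apply: (cv_ext (u := fun k => f k a + \big[Rplus/0]_(i <- s) f k i)).
  by move=> k; rewrite big_cons.
apply: CV_plus; first by apply: h; rewrite inE eqxx.
by apply: IH => i hi; apply: h; rewrite inE hi orbT.
Qed.

Definition incr (phi : nat -> nat) := forall k, (phi k < phi k.+1)%nat.

Lemma incr_ge phi : incr phi -> forall k, (k <= phi k)%nat.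
Proof. by move=> h; elim=> // k IH; apply: leq_ltn_trans IH (h k). Qed.

Lemma incr_comp phi psi : incr phi -> incr psi -> incr (fun k => phi (psi k)).
Proof.
move=> hphi hpsi k; apply: leq_trans (hphi _) _.
elim: (psi k.+1) (hpsi k) => [|m IH]; first by [].
rewrite leq_eqVlt => /orP [/eqP [->] //|]; rewrite ltnS => /IH h.
by apply: leq_trans h (ltnW (hphi m)).
Qed.

Lemma cv_sub (u : nat -> R) l phi : incr phi -> Un_cv u l -> Un_cv (fun k => u (phi k)) l.
Proof.
move=> hphi hu eps he; have [K hK] := hu eps he; exists K => k hk; apply: hK.
by apply/leP; apply: leq_trans (incr_ge hphi k); apply/leP.
Qed.

Lemma bw_real (u : nat -> R) B : (forall k, Rabs (u k) <= B) ->
  exists2 phi, incr phi & exists l, Un_cv (fun k => u (phi k)) l.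
Proof.
move=> hb.
have [l hl] : exists l, ValAdh u l.
  apply: (@Bolzano_Weierstrass u (fun c => -B <= c <= B)); first exact: compact_P3.
  by move=> k; have := hb k; have := Rle_abs (u k); have := Rle_abs (- u k); rewrite Rabs_Ropp; lra.
have near_l : forall m k, exists q, (m <= q)%nat /\ Rabs (u q - l) < / INR k.+1.
  move=> m k; pose e := mkposreal _ (inv_pos k).
  have [q [hq1 hq2]] := hl (disc l e) m (ex_intro _ e (fun y h => h)).
  by exists q; split => //; apply/leP.
have [pick hpick] := choice _ (fun m => choice _ (near_l m)).
pose fix phi k := if k is k'.+1 then pick (phi k').+1 k'.+1 else pick 0%nat 0%nat.
have hphi : forall k, Rabs (u (phi k) - l) < / INR k.+1.
  by case=> [|k] /=; [case: (hpick 0%nat 0%nat) | case: (hpick (phi k).+1 k.+1)].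
exists phi; first by move=> k /=; case: (hpick (phi k).+1 k.+1).
exists l => eps he; have [K hK] := inv_small he; exists K => k hk.
by apply: Rlt_trans (hphi k) (hK _ _); apply/leP.
Qed.

Lemma bw_finite (m : nat) (u : nat -> nat -> R) B :
  (forall k j, (j < m)%nat -> Rabs (u k j) <= B) ->
  exists2 phi, incr phi &
    exists l : nat -> R, forall j, (j < m)%nat -> Un_cv (fun k => u (phi k) j) (l j).
Proof.
elim: m => [|m IH] hb; first by exists id => //; exists (fun _ => 0).
have [phi hphi [l hl]] := IH (fun k j hj => hb k j (ltnW hj)).
have [psi hpsi [lm hlm]] := bw_real (u := fun k => u (phi k) m) (fun k => hb _ _ (ltnSn m)).
exists (fun k => phi (psi k)); first exact: incr_comp.
exists (fun j => if j == m then lm else l j) => j.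
rewrite ltnS leq_eqVlt => /orP [/eqP ->|hj]; first by rewrite eqxx.
have -> : (j == m) = false by apply/negbTE; rewrite neq_ltn hj.
exact: (cv_sub (u := fun k => u (phi k) j) hpsi (hl j hj)).
Qed.

Lemma vext d (x y : Vec d) : (forall i, x i = y i) -> x = y.
Proof. exact: functional_extensionality. Qed.

Definition vsub d (x y : Vec d) : Vec d := vadd x (vopp y).

Section Linearity.
Variables (d r : nat) (A : 'I_r -> Mat d).

Lemma mv_add (M : Mat d) x y : mv M (vadd x y) = vadd (mv M x) (mv M y).
Proof. by apply: vext => i; rewrite /mv /vadd -big_split; apply: eq_bigr => j _ /=; ring. Qed.

Lemma mv_scale (M : Mat d) c x : mv M (vscale c x) = vscale c (mv M x).
Proof. by apply: vext => i; rewrite /mv /vscale big_distrr; apply: eq_bigr => j _ /=; ring. Qed.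

Lemma mv_opp (M : Mat d) x : mv M (vopp x) = vopp (mv M x).
Proof.
have e : forall z : Vec d, vopp z = vscale (-1) z.
  by move=> z; apply: vext => i; rewrite /vopp /vscale; ring.
by rewrite !e mv_scale.
Qed.

Lemma act_add w x y : act A w (vadd x y) = vadd (act A w x) (act A w y).
Proof. by elim: w x y => //= i w IH x y; rewrite mv_add IH. Qed.

Lemma act_scale w c x : act A w (vscale c x) = vscale c (act A w x).
Proof. by elim: w x => //= i w IH x; rewrite mv_scale IH. Qed.

Lemma act_zero w : act A w (vzero d) = vzero d.
Proof.
have e : vzero d = vscale 0 (vzero d) by apply: vext => i; rewrite /vscale /vzero; ring.
by rewrite {1}e act_scale; apply: vext => i; rewrite /vscale /vzero; ring.
Qed.

Lemma act_opp w x : act A w (vopp x) = vopp (act A w x).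
Proof. by elim: w x => //= i w IH x; rewrite mv_opp IH. Qed.

Lemma act_cat w1 w2 x : act A (w1 ++ w2) x = act A w2 (act A w1 x).
Proof. by elim: w1 x => //= i w IH x; rewrite IH. Qed.

Lemma act_rcons w i x : act A (rcons w i) x = mv (A i) (act A w x).
Proof. by rewrite -cats1 act_cat. Qed.
End Linearity.

Lemma length_size (T : Type) (s : list T) : length s = size s.
Proof. by elim: s => //= a s ->. Qed.

Section Norm.
Variables (d : nat) (N : Vec d -> R).
Hypothesis hN : is_norm N.

Lemma N_ge0 x : 0 <= N x. Proof. by case: hN. Qed.
Lemma N_eq0 x : N x = 0 -> x = vzero d. Proof. by case: hN => _ [h _]; apply: h. Qed.
Lemma N_scale c x : N (vscale c x) = Rabs c * N x. Proof. by case: hN => _ [_ [h _]]; apply: h. Qed.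
Lemma N_tri x y : N (vadd x y) <= N x + N y. Proof. by case: hN => _ [_ [_ h]]; apply: h. Qed.

Lemma N_zero : N (vzero d) = 0.
Proof.
have -> : vzero d = vscale 0 (vzero d) by apply: vext => i; rewrite /vscale /vzero; ring.
by rewrite N_scale Rabs_R0 Rmult_0_l.
Qed.

Lemma N_opp x : N (vopp x) = N x.
Proof.
have -> : vopp x = vscale (-1) x by apply: vext => i; rewrite /vscale /vopp; ring.
by rewrite N_scale Rabs_Ropp Rabs_R1 Rmult_1_l.
Qed.

Lemma N_neq0 x : x <> vzero d -> 0 < N x.
Proof. by move=> h; case: (Rle_lt_or_eq_dec _ _ (N_ge0 x)) => // /esym /N_eq0. Qed.

Lemma N_normalize x : x <> vzero d -> N (vscale (/ N x) x) = 1.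
Proof.
move=> /N_neq0 hx; rewrite N_scale Rabs_right; first by field; lra.
by apply: Rle_ge; apply: Rlt_le; apply: Rinv_0_lt_compat.
Qed.

Lemma N_dist_sym x y : N (vsub x y) = N (vsub y x).
Proof.
rewrite -N_opp; congr N; apply: vext => i; rewrite /vsub /vadd /vopp; ring.
Qed.
End Norm.

Definition l1 d (x : Vec d) := \big[Rplus/0]_(i < d) Rabs (x i).

Lemma l1_coord d (x : Vec d) i : Rabs (x i) <= l1 x.
Proof. by apply: (@sum_le_term_fin _ (fun i : 'I_d => Rabs (x i))) => j; apply: Rabs_pos. Qed.

Lemma l1_is_norm d : is_norm (@l1 d).
Proof.
split; first by move=> x; apply: sum_ge0 => i _; apply: Rabs_pos.
split.
  move=> x h; apply: vext => i; have := l1_coord x i; rewrite h /vzero => hi.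
  by case: (Req_dec (x i) 0) => // hne; have := Rabs_pos_lt _ hne; lra.
split; first by move=> c x; rewrite /l1 big_distrr; apply: eq_bigr => i _; rewrite Rabs_mult.
by move=> x y; rewrite /l1 -big_split; apply: sum_le => i _; apply: Rabs_triang.
Qed.

Lemma cv_l1 d (y : nat -> Vec d) (l : Vec d) :
  (forall i, Un_cv (fun k => y k i) (l i)) -> Un_cv (fun k => l1 (vsub (y k) l)) 0.
Proof.
move=> h; have -> : 0 = \big[Rplus/0]_(i < d) 0 by rewrite big1.
apply: cv_sum => i _; have := cv_cvabs _ _ (CV_minus _ _ _ _ (h i) (cv_const (l i))).
by rewrite Rminus_diag Rabs_R0; apply: cv_ext => k; rewrite /vadd /vopp.
Qed.

Lemma bw_vec d (y : nat -> Vec d) B : (forall k i, Rabs (y k i) <= B) ->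
  exists2 phi, incr phi & exists l : Vec d, forall i, Un_cv (fun k => y (phi k) i) (l i).
Proof.
case: d y => [|d] y hb; first by exists id => //; exists (fun _ => 0); case.
have [phi hphi [l hl]] := @bw_finite d.+1 (fun k j => y k (inord j)) B (fun k j _ => hb _ _).
by exists phi => //; exists (fun i => l i) => i; have := hl i (ltn_ord i); rewrite inord_val.
Qed.

Definition ebasis d (j : 'I_d) : Vec d := fun i => if i == j then 1 else 0.

(* Equivalence of an arbitrary norm N with l1: N <= C l1 (by expanding in the
   canonical basis) and c l1 <= N with c > 0 (by compactness of the l1 sphere). *)
Section Equivalence.
Variables (d : nat) (N : Vec d -> R).
Hypothesis hN : is_norm N.

Definition basis_bound := \big[Rplus/0]_(j < d) N (ebasis j).

Lemma basis_bound_ge0 : 0 <= basis_bound.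
Proof. by apply: sum_ge0 => j _; apply: N_ge0. Qed.

Lemma N_le_l1 x : N x <= basis_bound * l1 x.
Proof.
pose part (s : seq 'I_d) : Vec d :=
  fun i => \big[Rplus/0]_(j <- s) (if i == j then x j else 0).
have hpart : forall s, N (part s) <= \big[Rplus/0]_(j <- s) (Rabs (x j) * N (ebasis j)).
  elim=> [|j s IH].
    rewrite big_nil (_ : part [::] = vzero d) ?N_zero //; first lra.
    by apply: vext => i; rewrite /part big_nil.
  rewrite big_cons (_ : part (j :: s) = vadd (vscale (x j) (ebasis j)) (part s)).
    by apply: Rle_trans (N_tri hN _ _) _; rewrite N_scale //; lra.
  by apply: vext => i; rewrite /part big_cons /vadd /vscale /ebasis; case: (i == j); ring.
have ex : x = part (index_enum 'I_d).
  apply: vext => i; rewrite /part -big_mkcond /= (eq_bigl (fun j => j == i)).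
    by rewrite big_pred1_eq.
  by move=> j; rewrite eq_sym.
rewrite {1}ex; apply: Rle_trans (hpart _) _; rewrite /l1 Rmult_comm big_distrl; apply: sum_le => j _ /=.
apply: Rmult_le_compat_l; first exact: Rabs_pos.
by apply: (@sum_le_term_fin _ (fun j : 'I_d => N (ebasis j))) => i; apply: N_ge0.
Qed.

(* N is l1-Lipschitz, hence continuous along coordinatewise limits. *)
Lemma N_cv (y : nat -> Vec d) (l : Vec d) :
  (forall i, Un_cv (fun k => y k i) (l i)) -> Un_cv (fun k => N (y k)) (N l).
Proof.
move=> h; have hb := basis_bound_ge0.
have hlip : forall k, Rabs (N (y k) - N l) <= basis_bound * l1 (vsub (y k) l).
  move=> k; apply: Rle_trans (N_le_l1 _); apply: Rabs_le; split.
    have := N_tri hN (vsub l (y k)) (y k); rewrite N_dist_sym //.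
    rewrite (_ : vadd (vsub l (y k)) (y k) = l); first lra.
    by apply: vext => i; rewrite /vsub /vadd /vopp; ring.
  have := N_tri hN (vsub (y k) l) l.
  rewrite (_ : vadd (vsub (y k) l) l = y k); first lra.
  by apply: vext => i; rewrite /vsub /vadd /vopp; ring.
move=> eps he; have hc := CV_mult _ _ _ _ (cv_const basis_bound) (cv_l1 h).
rewrite Rmult_0_r in hc; have [K hK] := hc eps he; exists K => k hk.
apply: Rle_lt_trans (hlip k) _; move: (hK k hk); rewrite /R_dist Rminus_0_r => hK'.
by apply: Rle_lt_trans (Rle_abs _) hK'.
Qed.

End Equivalence.

Lemma N_l1_lower d (N : Vec d -> R) : is_norm N -> exists2 c, 0 < c & forall x, c * l1 x <= N x.
Proof.
move=> hN; apply: NNPP => hno.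
have hbad : forall j : nat, exists y, l1 y = 1 /\ N y < / INR j.+1.
  move=> j; apply: NNPP => hj; apply: hno; exists (/ INR j.+1); first exact: inv_pos.
  move=> x; apply: Rnot_lt_le => hlt.
  have hl1 : 0 < l1 x.
    by have := N_ge0 hN x; have := N_ge0 (l1_is_norm d) x; have := inv_pos j; nra.
  have hx0 : x <> vzero d by move=> e; rewrite e (N_zero (l1_is_norm d)) in hl1; lra.
  apply: hj; exists (vscale (/ l1 x) x); split; first by have := N_normalize (l1_is_norm d) hx0.
  have hinv : 0 < / l1 x by apply: Rinv_0_lt_compat.
  rewrite N_scale // Rabs_right; last lra.
  apply: (Rmult_lt_reg_l (l1 x)) => //; rewrite -Rmult_assoc Rinv_r; lra.
have [y hy] := choice _ hbad.
have [phi hphi [l hl]] := @bw_vec d y 1 (fun k i => Rle_trans _ _ _ (l1_coord _ _) (Req_le _ _ (proj1 (hy k)))).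
have hl1 : l1 l = 1.
  apply: (UL_sequence _ _ _ (N_cv (l1_is_norm d) hl)).
  by apply: (cv_ext (u := fun _ => 1)) (cv_const 1) => k; rewrite (proj1 (hy _)).
have hNl : N l <= 0.
  apply: (Rle_cv_lim (fun k => Rlt_le _ _ (proj2 (hy (phi k)))) (N_cv hN hl)).
  exact: cv_sub hphi cv_inv.
have : l = vzero d by apply: (N_eq0 hN); have := N_ge0 hN l; lra.
by move=> e; move: hl1; rewrite e N_zero //; [lra | apply: l1_is_norm].
Qed.

Definition mxs d (M : Mat d) := \big[Rplus/0]_(i < d) \big[Rplus/0]_(j < d) Rabs (M i j).

Lemma mxs_ge0 d (M : Mat d) : 0 <= mxs M.
Proof. by apply: sum_ge0 => i _; apply: sum_ge0 => j _; apply: Rabs_pos. Qed.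

Lemma l1_mv d (M : Mat d) x : l1 (mv M x) <= mxs M * l1 x.
Proof.
rewrite /l1 /mxs Rmult_comm big_distrr; apply: sum_le => i _ /=.
apply: Rle_trans (sum_abs _ _ _) _; rewrite big_distrr; apply: sum_le => j _ /=.
rewrite Rabs_mult Rmult_comm; apply: Rmult_le_compat_r; first exact: Rabs_pos.
exact: l1_coord.
Qed.

Lemma N_act_bound d r (A : 'I_r -> Mat d) (N : Vec d -> R) : is_norm N ->
  exists2 C, 1 <= C & forall w x, N (act A w x) <= C ^ length w * N x.
Proof.
move=> hN; have [c hc hcl] := N_l1_lower hN.
have hS : 0 <= \big[Rplus/0]_(i < r) mxs (A i) by apply: sum_ge0 => i _; apply: mxs_ge0.
have hb := basis_bound_ge0 hN.
pose C := 1 + basis_bound N * \big[Rplus/0]_(i < r) mxs (A i) / c.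
have hC : 1 <= C.
  rewrite /C; have : 0 <= basis_bound N * \big[Rplus/0]_(i < r) mxs (A i) / c; last lra.
  by apply: Rmult_le_pos; [apply: Rmult_le_pos | apply: Rlt_le; apply: Rinv_0_lt_compat].
have hmv : forall i x, N (mv (A i) x) <= C * N x.
  move=> i x; apply: Rle_trans (N_le_l1 hN _) _.
  have hAi : mxs (A i) <= \big[Rplus/0]_(i < r) mxs (A i).
    by apply: (@sum_le_term_fin _ (fun i => mxs (A i))) => j; apply: mxs_ge0.
  have hx : l1 x <= N x / c.
    apply: (Rmult_le_reg_l c) => //; have -> : c * (N x / c) = N x by field; lra.
    exact: hcl.
  have h1 := Rmult_le_compat_l _ _ _ hb (l1_mv (A i) x).
  have h2 : mxs (A i) * l1 x <= \big[Rplus/0]_(i < r) mxs (A i) * (N x / c).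
    by apply: Rmult_le_compat => //; [apply: mxs_ge0 | apply: N_ge0 (l1_is_norm d) _].
  have hN0 := N_ge0 hN x.
  apply: Rle_trans h1 _; apply: Rle_trans (Rmult_le_compat_l _ _ _ hb h2) _.
  rewrite /C Rmult_plus_distr_r; have : 0 <= N x by []; rewrite /Rdiv; nra.
exists C => // w; elim: w => [|i w IH] x /=; first lra.
apply: Rle_trans (IH _) _; rewrite (Rmult_comm C) Rmult_assoc; apply: Rmult_le_compat_l.
  by apply: pow_le; lra.
exact: hmv.
Qed.

Lemma opnorm_ge d r (A : 'I_r -> Mat d) (N : Vec d -> R) w x : is_norm N ->
  x <> vzero d -> N (act A w x) / N x <= opnorm N (act A w).
Proof.
move=> hN hx; have hp := N_neq0 hN hx; have [C _ hCw] := N_act_bound A hN.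
apply: Rsup_ge.
  by exists (C ^ length w) => y [z [hz ->]]; have := hCw w z; rewrite hz; lra.
exists (vscale (/ N x) x); split; first exact: N_normalize.
rewrite act_scale N_scale // Rabs_right; first by rewrite /Rdiv Rmult_comm.
by apply: Rle_ge; apply: Rlt_le; apply: Rinv_0_lt_compat.
Qed.

Fixpoint words_upto r (k : nat) : seq (seq 'I_r) :=
  if k is k'.+1 then [::] :: [seq rcons w i | w <- words_upto r k', i <- enum 'I_r]
  else [:: [::]].

Lemma words_uptoP r k (w : seq 'I_r) : (w \in words_upto r k) = (size w <= k)%N.
Proof.
elim: k w => [|k IH] w /=; first by rewrite inE; case: w.
rewrite inE; case/lastP: w => [|w i] //=.
rewrite (_ : (rcons w i == [::]) = false); last by case: w.
rewrite /= size_rcons ltnS -IH; apply/allpairsP/idP => [[[w' i'] /= [h1 h2 /eqP]]|h].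
  by rewrite eqseq_rcons => /andP [/eqP -> _].
by exists (w, i); split => //; rewrite mem_enum.
Qed.

Lemma words_upto_size r k (j : 'I_(size (words_upto r k))) :
  (size (nth [::] (words_upto r k) j) <= k)%N.
Proof. by rewrite -words_uptoP; apply: mem_nth. Qed.

(* Krylov spaces: the rows of krylov_mx k x are the vectors G x for all words
   G of length at most k.  For an irreducible family they span R^d as soon as
   k >= d - 1, since the increasing chain of row spaces stabilizes within d
   steps, and a stable row space is invariant, hence everything. *)
Section Krylov.
Import GRing.Theory.
Local Open Scope ring_scope.
Variables (d r : nat) (A : 'I_r -> Mat d).

Definition rv (x : Vec d) : 'rV[R]_d := \row_i x i.
Definition mxT (M : Mat d) : 'M[R]_d := \matrix_(i, j) M j i.
Definition krylov_mx k (x : Vec d) : 'M[R]_(size (words_upto r k), d) :=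
  \matrix_(j, i) act A (nth [::] (words_upto r k) j) x i.

Lemma rv_mv M x : rv (mv M x) = rv x *m mxT M.
Proof. by apply/rowP => j; rewrite !mxE /mv; apply: eq_bigr => i _; rewrite !mxE mulrC. Qed.

Lemma rv_add x y : rv (vadd x y) = rv x + rv y.
Proof. by apply/rowP => j; rewrite !mxE. Qed.

Lemma rv_scale c x : rv (vscale c x) = c *: rv x.
Proof. by apply/rowP => j; rewrite !mxE. Qed.

Lemma rv_zero : rv (vzero d) = 0.
Proof. by apply/rowP => j; rewrite !mxE. Qed.

Lemma rv_inj x y : rv x = rv y -> x = y.
Proof. by move=> h; apply: vext => i; have := congr1 (fun u : 'rV_d => u 0 i) h; rewrite !mxE. Qed.

Lemma row_krylov k x j : row j (krylov_mx k x) = rv (act A (nth [::] (words_upto r k) j) x).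
Proof. by apply/rowP => i; rewrite !mxE. Qed.

Lemma krylov_row k x w : (size w <= k)%N -> (rv (act A w x) <= krylov_mx k x)%MS.
Proof.
rewrite -words_uptoP => hw; have hi : (index w (words_upto r k) < size (words_upto r k))%N.
  by rewrite index_mem.
by rewrite -[w](nth_index [::] hw) -(@row_krylov k x (Ordinal hi)) row_sub.
Qed.

Lemma krylov_mono k k' x : (k <= k')%N -> (krylov_mx k x <= krylov_mx k' x)%MS.
Proof.
move=> hk; apply/row_subP => j; rewrite row_krylov; apply: krylov_row.
exact: leq_trans (words_upto_size j) hk.
Qed.

Lemma krylov_mul k x i : (krylov_mx k x *m mxT (A i) <= krylov_mx k.+1 x)%MS.
Proof.
apply/row_subP => j; rewrite row_mul row_krylov -rv_mv -act_rcons; apply: krylov_row.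
by rewrite size_rcons ltnS; apply: words_upto_size.
Qed.

Definition stable k x := (krylov_mx k.+1 x <= krylov_mx k x)%MS.

Lemma stable_next k x : stable k x -> stable k.+1 x.
Proof.
move=> hs; apply/row_subP => j; rewrite row_krylov.
have := words_upto_size j.
case/lastP: (nth [::] (words_upto r k.+2) j) => [|w i] h; first exact: krylov_row.
rewrite size_rcons ltnS in h.
rewrite act_rcons rv_mv; apply: submx_trans (krylov_mul k x i).
by apply: submxMr; apply: submx_trans hs; apply: krylov_row.
Qed.

Lemma stable_after j x : stable j x -> forall k, (j <= k)%N -> (krylov_mx k x <= krylov_mx j x)%MS.
Proof.
move=> hs; elim=> [|k IH]; first by rewrite leqn0 => /eqP ->.
rewrite leq_eqVlt => /orP [/eqP <- //|]; rewrite ltnS => hk.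
apply: submx_trans (IH hk); elim: k hk {IH} => [|k IHk]; first by rewrite leqn0 => /eqP <-.
by rewrite leq_eqVlt => /orP [/eqP <- //|]; rewrite ltnS => hk; apply: stable_next (IHk hk).
Qed.

(* Until it stabilizes, the rank of the Krylov matrix grows at each step. *)
Lemma exists_stable x : x <> vzero d -> exists2 j, (j < d)%N & stable j x.
Proof.
move=> hx.
have H : forall k, (exists2 j, (j < k)%N & stable j x) \/ (k < \rank (krylov_mx k x))%N.
  elim=> [|k IH].
    right; rewrite lt0n mxrank_eq0; apply/eqP => h; apply: hx; apply: rv_inj.
    have := row_krylov x (Ordinal (index_mem [::] (words_upto r 0))).
    by rewrite h row0 rv_zero => <-.
  case: IH => [[j hj hs]|hr]; first by left; exists j => //; apply: ltnW.
  case hs : (stable k x); first by left; exists k.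
  right; apply: leq_ltn_trans hr _.
  rewrite (ltn_leqif (mxrank_leqif_sup (krylov_mono x (leqnSn k)))).
  by move: hs; rewrite /stable => ->.
case: (H d) => // hr; exfalso; have := rank_leq_col (krylov_mx d x); rewrite leqNgt hr //.
Qed.

Lemma krylov_full x p : irreducible A -> x <> vzero d -> (d - 1 <= p)%N ->
  (1%:M <= krylov_mx p x)%MS.
Proof.
move=> hirr hx hp; have [j hj hs] := exists_stable hx.
have hjp : (j <= p)%N by apply: leq_trans hp; rewrite -ltnS; case: (d) hj => // d' h; rewrite subn1.
pose V z := (rv z <= krylov_mx p x)%MS.
have hsub : subspace V.
  split; first by rewrite /V rv_zero sub0mx.
  split; first by move=> a b ha hb; rewrite /V rv_add addmx_sub.
  by move=> c a ha; rewrite /V rv_scale scalemx_sub.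
have hinv : forall i z, V z -> V (mv (A i) z).
  move=> i z hz; rewrite /V rv_mv; apply: submx_trans (submxMr _ hz) _.
  apply: submx_trans (krylov_mul p x i) _; apply: submx_trans (krylov_mono x hjp).
  by apply: (stable_after hs); apply: leq_trans hjp _.
case: (hirr V hsub hinv) => [h|h].
  by exfalso; apply: hx; apply/h; exact: (@krylov_row p x [::] (leq0n p)).
apply/row_subP => i; rewrite (_ : row i 1%:M = rv (ebasis i)); first exact: h.
by apply/rowP => j'; rewrite !mxE /ebasis eq_sym; case: (j' == i).
Qed.
End Krylov.

Definition rl1 n (u : 'rV[R]_n) := \big[Rplus/0]_(j < n) Rabs (u ord0 j).
Definition mn a b (Q : 'M[R]_(a, b)) := \big[Rplus/0]_(i < a) \big[Rplus/0]_(j < b) Rabs (Q i j).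

Lemma rl1_ge0 n (u : 'rV_n) : 0 <= rl1 u.
Proof. by apply: sum_ge0 => j _; apply: Rabs_pos. Qed.

Lemma mn_ge0 a b (Q : 'M_(a, b)) : 0 <= mn Q.
Proof. by apply: sum_ge0 => i _; apply: sum_ge0 => j _; apply: Rabs_pos. Qed.

Lemma rl1_add n (u v : 'rV_n) : rl1 (u + v)%R <= rl1 u + rl1 v.
Proof. by rewrite /rl1 -big_split; apply: sum_le => j _ /=; rewrite mxE; apply: Rabs_triang. Qed.

Lemma rl1_opp n (u : 'rV_n) : rl1 (- u)%R = rl1 u.
Proof. by apply: eq_bigr => j _; rewrite mxE; apply: Rabs_Ropp. Qed.

Lemma rl1_eq0 n (u : 'rV_n) : rl1 u <= 0 -> u = 0%R.
Proof.
move=> h; apply/rowP => j; rewrite mxE.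
have : Rabs (u ord0 j) <= rl1 u by apply: (@sum_le_term_fin _ (fun j => Rabs (u ord0 j))) => k; apply: Rabs_pos.
by move=> h2; case: (Req_dec (u ord0 j) 0) => // hne; have := Rabs_pos_lt _ hne; lra.
Qed.

Lemma rl1_rv d (z : Vec d) : rl1 (rv z) = l1 z.
Proof. by apply: eq_bigr => j _; rewrite mxE. Qed.

Lemma rl1_mul a b (u : 'rV_a) (Q : 'M_(a, b)) : rl1 (u *m Q)%R <= rl1 u * mn Q.
Proof.
have e : forall j, Rabs ((u *m Q)%R ord0 j) <= \big[Rplus/0]_(i < a) (Rabs (u ord0 i) * Rabs (Q i j)).
  move=> j; rewrite mxE; apply: Rle_trans (sum_abs _ _ _) _.
  by apply: sum_le => i _; rewrite Rabs_mult; lra.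
apply: Rle_trans (sum_le _ (fun j _ => e j)) _; rewrite (exchange_big_dep xpredT) //=.
rewrite /rl1 /mn big_distrl; apply: sum_le => i _ /=.
rewrite -big_distrr /=; apply: Rmult_le_compat_l; first exact: Rabs_pos.
apply: (@sum_le_term_fin _ (fun i => \big[Rplus/0]_(j < b) Rabs (Q i j))) => k.
by apply: sum_ge0 => j _; apply: Rabs_pos.
Qed.

Lemma inj_unit n (P : 'M[R]_n) : (forall u : 'rV_n, (u *m P)%R = 0%R -> u = 0%R) -> P \in unitmx.
Proof.
move=> h; rewrite -row_free_unit -kermx_eq0; apply/eqP/row_matrixP => i; rewrite row0; apply: h.
by rewrite -row_mul mulmx_ker row0.
Qed.

(* Perturbation of a left inverse: if B *m M is within 1/2 of the identity
   (as an operator on row vectors in l1), then every z = a *m M with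
   rl1 a <= 2 mn(B) rl1 z (Neumann series argument). *)
Lemma perturbed_solve m n (B : 'M[R]_(n, m)) (M : 'M[R]_(m, n)) :
  (forall u : 'rV_n, rl1 (u *m (B *m M - 1%:M))%R <= rl1 u / 2) ->
  forall z : 'rV_n, exists a : 'rV_m, (a *m M)%R = z /\ rl1 a <= 2 * mn B * rl1 z.
Proof.
move=> hE z; set E := (B *m M - 1%:M)%R in hE.
have hP : (B *m M = 1%:M + E)%R by rewrite /E GRing.addrC GRing.subrK.
have hU : (B *m M)%R \in unitmx.
  apply: inj_unit => u; rewrite hP mulmxDr mulmx1 => /eqP; rewrite GRing.addr_eq0 => /eqP hu.
  have e : rl1 u = rl1 (u *m E)%R by rewrite {1}hu rl1_opp.
  by apply: rl1_eq0; have := hE u; have := rl1_ge0 u; lra.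
pose u := (z *m invmx (B *m M))%R.
have hu : (u *m (B *m M))%R = z by rewrite /u mulmxKV.
exists (u *m B)%R; split; first by rewrite -mulmxA.
have hul : rl1 u <= 2 * rl1 z.
  have e : u = (z - u *m E)%R by rewrite -{1}hu hP mulmxDr mulmx1 GRing.addrK.
  by have := rl1_add z (- (u *m E))%R; rewrite rl1_opp -e; have := hE u; lra.
apply: Rle_trans (rl1_mul _ _) _; have := mn_ge0 B; have := rl1_ge0 z.
by have := Rmult_le_compat_r _ _ _ (mn_ge0 B) hul; lra.
Qed.

Section LocalSolve.
Import GRing.Theory.
Variables (d r : nat) (A : 'I_r -> Mat d) (p : nat).

Lemma krylov_sub y x : (krylov_mx A p y - krylov_mx A p x)%R = krylov_mx A p (vsub y x).
Proof. by apply/matrixP => i j; rewrite !mxE /vsub act_add act_opp. Qed.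

Lemma krylov_mn_bound : exists2 G, 0 <= G & forall z, mn (krylov_mx A p z) <= G * l1 z.
Proof.
have [C hC hCw] := N_act_bound A (l1_is_norm d).
exists (\big[Rplus/0]_(j < size (words_upto r p)) C ^ p).
  by apply: sum_ge0 => j _; apply: pow_le; lra.
move=> z; rewrite /mn Rmult_comm big_distrr; apply: sum_le => j _ /=.
rewrite (eq_bigr (fun i => Rabs (act A (nth [::] (words_upto r p) j) z i))); last by move=> i _; rewrite mxE.
apply: Rle_trans (hCw _ _) _; rewrite Rmult_comm; apply: Rmult_le_compat_l.
  exact: N_ge0 (l1_is_norm d) z.
by apply: Rle_pow => //; rewrite length_size; apply/leP; apply: words_upto_size.
Qed.

Lemma krylov_local_solve x : irreducible A -> x <> vzero d -> (d - 1 <= p)%nat ->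
  exists2 rho0, 0 < rho0 & exists2 K, 0 <= K & forall y, l1 (vsub y x) <= rho0 ->
    forall z : 'rV_d, exists a, (a *m krylov_mx A p y)%R = z /\ rl1 a <= K * rl1 z.
Proof.
move=> hirr hx hp; have [G hG hGz] := krylov_mn_bound.
set B := pinvmx (krylov_mx A p x).
have hB : (B *m krylov_mx A p x)%R = 1%:M%R.
  by have := mulmxKpV (krylov_full hirr hx hp); rewrite mul1mx.
have hb := mn_ge0 B; have hbG := Rmult_le_pos _ _ hb hG.
exists (/ (2 * (mn B * G + 1))); first by apply: Rinv_0_lt_compat; lra.
exists (2 * mn B); first lra.
move=> y hy; apply: perturbed_solve => u.
rewrite -hB -mulmxBr krylov_sub mulmxA; apply: Rle_trans (rl1_mul _ _) _.
apply: Rle_trans (Rmult_le_compat_l _ _ _ (rl1_ge0 _) (hGz _)) _.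
apply: Rle_trans (Rmult_le_compat_r _ _ _ (Rmult_le_pos _ _ hG (N_ge0 (l1_is_norm d) _)) (rl1_mul u B)) _.
have hsmall : mn B * G * l1 (vsub y x) <= / 2.
  apply: Rle_trans (Rmult_le_compat_l _ _ _ hbG hy) _.
  apply: (Rmult_le_reg_l (2 * (mn B * G + 1))); first lra.
  by rewrite -Rmult_assoc (Rmult_comm _ (mn B * G)) Rmult_assoc Rinv_r; lra.
have := Rmult_le_compat_l _ _ _ (rl1_ge0 u) hsmall.
by rewrite /Rdiv; lra.
Qed.
End LocalSolve.

Lemma wsum_app d (l l' : list (R * Vec d)) : wsum (l ++ l') = vadd (wsum l) (wsum l').
Proof.
elim: l => [|[c v] l IH] /=; first by apply: vext => i; rewrite /vadd /vzero; ring.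
by rewrite IH; apply: vext => i; rewrite /vadd; ring.
Qed.

Lemma wsum_map d (I : Type) (s : seq I) (f : I -> R * Vec d) i :
  wsum (map f s) i = \big[Rplus/0]_(j <- s) ((f j).1 * (f j).2 i).
Proof.
elim: s => [|a s IH] /=; first by rewrite big_nil.
by rewrite big_cons -IH; case: (f a) => c v; rewrite /vadd /vscale.
Qed.

Lemma weights_map (I T : Type) (s : seq I) (f : I -> R * T) :
  fold_right Rplus 0 (map fst (map f s)) = \big[Rplus/0]_(j <- s) (f j).1.
Proof. by elim: s => [|a s IH] /=; [rewrite big_nil | rewrite big_cons IH]. Qed.

Lemma fold_plus_cat (l l' : seq R) :
  fold_right Rplus 0 (l ++ l') = fold_right Rplus 0 l + fold_right Rplus 0 l'.
Proof. by elim: l => [|a l IH] /=; [ring | rewrite IH; ring]. Qed.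

Lemma act_wsum d r (A : 'I_r -> Mat d) w (l : list (R * Vec d)) :
  act A w (wsum l) = wsum (map (fun cv => (cv.1, act A w cv.2)) l).
Proof.
by elim: l => [|[c v] l IH] /=; [apply: act_zero | rewrite act_add act_scale IH].
Qed.

Lemma In_in (T : eqType) (a : T) (s : seq T) : In a s -> a \in s.
Proof. by elim: s => //= b s IH [->|h]; rewrite inE ?eqxx // IH ?orbT. Qed.

Lemma list_max_attained (T : Type) (f : T -> R) (l : list T) :
  l <> nil -> exists2 a, In a l & forall b, In b l -> f b <= f a.
Proof.
elim: l => // a l IH _; case: l IH => [|b l] IH.
  by exists a => [|c [<-|[]]]; [left | lra].
have [m hm hmax] := IH ltac:(discriminate).
case: (Rle_lt_dec (f a) (f m)) => h.
  by exists m => [|c [<-|hc]]; [right | | apply: hmax].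
by exists a => [|c [<-|hc]]; [left | lra | have := hmax c hc; lra].
Qed.

Section ConvexNorm.
Variables (d : nat) (N : Vec d -> R).
Hypothesis hN : is_norm N.

Lemma N_wsum (l : list (R * Vec d)) M :
  (forall cv, In cv l -> 0 <= fst cv /\ N (snd cv) <= M) ->
  N (wsum l) <= fold_right Rplus 0 (map fst l) * M.
Proof.
elim: l => [|[c v] l IH] /= h; first by rewrite N_zero //; lra.
apply: Rle_trans (N_tri hN _ _) _; rewrite N_scale //.
have [/= h1 h2] := h (c, v) (or_introl erefl).
have := IH (fun cv hcv => h cv (or_intror hcv)); rewrite Rabs_right; last lra.
by have := Rmult_le_compat_l _ _ _ h1 h2; lra.
Qed.

Lemma wsum_dominated (l : list (R * Vec d)) :
  (forall cv, In cv l -> 0 <= cv.1) -> fold_right Rplus 0 (map fst l) = 1 ->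
  exists2 cv, In cv l & N (wsum l) <= N cv.2.
Proof.
move=> h0 h1; have hne : l <> nil by move=> e; rewrite e /= in h1; lra.
have [m hm hmax] := list_max_attained (fun cv : R * Vec d => N cv.2) hne.
exists m => //; have := @N_wsum l (N m.2); rewrite h1 Rmult_1_l; apply.
by move=> cv hcv; split; [apply: h0 | apply: hmax].
Qed.
End ConvexNorm.

(* The convex hull of finitely many points, enumerated by a list L, is closed
   under limits of rescalings t_k y -> y: weights live in a compact simplex. *)
Section FiniteHull.
Variables (d : nat) (S : Vec d -> Prop) (L : seq (Vec d)).
Hypothesis hSL : forall v, S v <-> exists2 j, (j < size L)%N & nth (vzero d) L j = v.

Let idx := iota 0 (size L).

Lemma hull_weights y : conv S y -> exists lam : nat -> R,
  [/\ forall j, 0 <= lam j, \big[Rplus/0]_(j <- idx) lam j = 1 &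
      forall i, y i = \big[Rplus/0]_(j <- idx) (lam j * nth (vzero d) L j i)].
Proof.
move=> [l [hl [h1 ->]]]; rewrite -h1; elim: l hl {h1} => [|[c v] l IH] hl /=.
  exists (fun _ => 0); split; [by move=> _; lra | by rewrite big1 |].
  by move=> i; rewrite /vzero big1 // => j _; ring.
have [/= hc /hSL [j hj hjv]] := hl (c, v) (or_introl erefl).
have [lam [hl1 hl2 hl3]] := IH (fun cv h => hl cv (or_intror h)).
have hjin : j \in idx by rewrite mem_iota.
have hdelta : forall (f : nat -> R), \big[Rplus/0]_(j' <- idx) (if j' == j then f j' else 0) = f j.
  move=> f; rewrite (bigD1_seq j) ?iota_uniq //= eqxx big1 => [|k /negbTE ->] //; ring.
exists (fun j' => lam j' + if j' == j then c else 0); split.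
- by move=> j'; have := hl1 j'; case: (j' == j); lra.
- by rewrite big_split /= hl2 (hdelta (fun _ => c)) Rplus_comm.
- move=> i; rewrite /vadd /vscale hl3 -hjv.
  transitivity (\big[Rplus/0]_(j0 <- idx) (lam j0 * nth (vzero d) L j0 i +
                 if j0 == j then c * nth (vzero d) L j0 i else 0)).
    by rewrite big_split /= (hdelta (fun j0 => c * nth (vzero d) L j0 i)) Rplus_comm.
  by apply: eq_bigr => j0 _; case: eqP => _; ring.
Qed.

Lemma weights_hull y (lam : nat -> R) :
  (forall j, (j < size L)%N -> 0 <= lam j) -> \big[Rplus/0]_(j <- idx) lam j = 1 ->
  (forall i, y i = \big[Rplus/0]_(j <- idx) (lam j * nth (vzero d) L j i)) -> conv S y.
Proof.
move=> h0 h1 h2; exists (map (fun j => (lam j, nth (vzero d) L j)) idx); split; [|split].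
- move=> cv /in_map_iff [j [<- hj]] /=.
  have hj' : (j < size L)%N by have := In_in hj; rewrite mem_iota => /andP [].
  by split; [apply: h0 | apply/hSL; exists j].
- by rewrite weights_map.
- by apply: vext => i; rewrite wsum_map h2.
Qed.

Lemma hull_closed (t : nat -> R) y :
  Un_cv t 1 -> (forall k, conv S (vscale (t k) y)) -> conv S y.
Proof.
move=> ht hy; have [lam hlam] := choice _ (fun k => hull_weights (hy k)).
have hb : forall k j, (j < size L)%N -> Rabs (lam k j) <= 1.
  move=> k j hj; have [h0 h1 _] := hlam k; rewrite Rabs_right; last exact: Rle_ge.
  by rewrite -h1; apply: sum_le_term; [apply: iota_uniq | rewrite mem_iota | apply: h0].
have [phi hphi [l hl]] := bw_finite hb.
have hl_idx : forall j, j \in idx -> Un_cv (fun k => lam (phi k) j) (l j).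
  by move=> j; rewrite mem_iota => /andP [_ hj]; apply: hl.
apply: (@weights_hull y l).
- move=> j hj; apply: (Rle_cv_lim _ (cv_const 0) (hl j hj)) => k.
  by have [h0 _ _] := hlam (phi k).
- apply: (UL_sequence _ _ _ (cv_sum hl_idx)).
  by apply: (cv_ext (u := fun _ => 1)) (cv_const 1) => k; have [_ h1 _] := hlam (phi k).
- move=> i; apply: (UL_sequence _ _ _ _ (cv_sum (fun j hj => CV_mult _ _ _ _ (hl_idx j hj) (cv_const _)))).
  apply: (cv_ext (u := fun k => t (phi k) * y i)).
    by move=> k; have [_ _ h2] := hlam (phi k); rewrite -h2.
  by rewrite -{2}(Rmult_1_l (y i)); apply: CV_mult (cv_sub hphi ht) (cv_const _).
Qed.
End FiniteHull.

Section Radii.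
Variables (d r : nat) (A : 'I_r -> Mat d) (N : Vec d -> R) (p : nat).
Hypothesis hN : is_norm N.

Definition Apm (x : Vec d) : Vec d -> Prop := fun v => Ap_img A p x v \/ Ap_img A p (vopp x) v.
Definition radii (x : Vec d) : R -> Prop := fun t => 0 <= t /\ (forall y, ball N t y -> conv (Apm x) y).

Lemma chiE : chi N A p = Rinf (fun z => exists x, N x = 1 /\ z = Rsup (radii x)).
Proof. by []. Qed.

Definition apm_list x : seq (Vec d) :=
  map (fun w => act A w x) (words_upto r p) ++ map (fun w => act A w (vopp x)) (words_upto r p).

Lemma apm_listP x v :
  Apm x v <-> exists2 j, (j < size (apm_list x))%N & nth (vzero d) (apm_list x) j = v.
Proof.
have hlen : forall w : seq 'I_r, (length w <= p)%nat <-> w \in words_upto r p.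
  by move=> w; rewrite words_uptoP length_size.
rewrite /apm_list size_cat !size_map; set W := words_upto r p; split.
  case=> [[w [/hlen hw ->]]|[w [/hlen hw ->]]].
    exists (index w W); first by apply: ltn_addr; rewrite index_mem.
    by rewrite nth_cat size_map index_mem hw (nth_map [::]) ?index_mem // nth_index.
  exists (size W + index w W)%N; first by rewrite ltn_add2l index_mem.
  by rewrite nth_cat size_map ltnNge leq_addr /= addKn (nth_map [::]) ?index_mem // nth_index.
move=> [j hj <-]; rewrite nth_cat size_map; case: ltnP => h.
  left; exists (nth [::] W j); rewrite (nth_map [::]) //; split => //.
  by apply/hlen; apply: mem_nth.
have hj' : (j - size W < size W)%N by rewrite ltn_subLR.
right; exists (nth [::] W (j - size W)); rewrite (nth_map [::]) //; split => //.
by apply/hlen; apply: mem_nth.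
Qed.

(* A combination z = u *m krylov_mx y with rl1 u <= 1 lies in conv (Apm y):
   split u into signs and put the missing weight 1 - rl1 u on y and -y. *)
Lemma conv_of_coef (y z : Vec d) (u : 'rV_(size (words_upto r p))) :
  (u *m krylov_mx A p y)%R = rv z -> rl1 u <= 1 -> conv (Apm y) z.
Proof.
move=> hu hl; set w := fun j : 'I_(size (words_upto r p)) => nth [::] (words_upto r p) j.
have hw : forall j, (length (w j) <= p)%nat.
  by move=> j; rewrite length_size; apply: words_upto_size.
pose F j := (Rabs (u ord0 j),
  if Rle_dec 0 (u ord0 j) then act A (w j) y else act A (w j) (vopp y)).
exists (map F (index_enum _) ++ [:: ((1 - rl1 u) / 2, y); ((1 - rl1 u) / 2, vopp y)]).
split; [|split].
- move=> cv hcv; case: (in_app_or _ _ _ hcv) => [/in_map_iff [j [<- _]]|].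
    split; first exact: Rabs_pos.
    by rewrite /F /Apm /=; case: Rle_dec => h /=; [left | right]; exists (w j).
  by rewrite /Apm; case=> [<-|[<-|//]] /=; (split; [lra|]); [left | right]; exists [::].
- by rewrite map_cat fold_plus_cat weights_map /=; rewrite -/(rl1 u); lra.
- apply: vext => i; rewrite wsum_app /vadd wsum_map /= /vadd /vscale /vopp /vzero.
  have -> : z i = rv z ord0 i by rewrite mxE.
  rewrite -hu mxE (eq_bigr (fun j => u ord0 j * krylov_mx A p y j i)).
    (* the leftover weights on y and -y cancel *)
    by rewrite (_ : (1 - rl1 u) / 2 * y i + ((1 - rl1 u) / 2 * - y i + 0) = 0) ?Rplus_0_r //; ring.
  move=> j _; rewrite /F /= mxE; case: Rle_dec => h /=.
    by rewrite Rabs_right //; lra.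
  by rewrite Rabs_left; [rewrite (act_opp A (w j) y) /vopp /w; ring | lra].
Qed.

Lemma conv_Apm_bound : exists2 C, 0 <= C & forall x y, conv (Apm x) y -> N y <= C * N x.
Proof.
have [C hC hCw] := N_act_bound A hN.
exists (C ^ p) => [|x y [l [h1 [h2 ->]]]]; first by apply: pow_le; lra.
have := @N_wsum d N hN l (C ^ p * N x); rewrite h2 Rmult_1_l; apply.
move=> cv hcv; have [hc hs] := h1 cv hcv; split => //.
have hpow : forall w : seq 'I_r, (length w <= p)%nat -> C ^ length w <= C ^ p.
  by move=> w hw; apply: Rle_pow => //; apply/leP.
case: hs => [[w [hw ->]]|[w [hw ->]]]; apply: Rle_trans (hCw _ _) _; rewrite ?N_opp //;
  by apply: Rmult_le_compat_r; [apply: N_ge0 | apply: hpow].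
Qed.

Lemma radii_lub x : x <> vzero d -> is_lub (radii x) (Rsup (radii x)).
Proof.
move=> hx; apply: Rsup_lub.
  exists 0; split; first lra; move=> y hy.
  have -> : y = vzero d by apply: (N_eq0 hN); have := N_ge0 hN y; rewrite /ball in hy; lra.
  exists [:: (/2, x); (/2, vopp x)]; split; [|split].
  + by rewrite /Apm => cv [<-|[<-|//]] /=; (split; [lra|]); [left | right]; exists [::].
  + by simpl; field.
  + by apply: vext => i; rewrite /= /vadd /vscale /vopp /vzero; field.
have [C hC hCb] := conv_Apm_bound.
set e := vscale (/ N x) x; have he : N e = 1 by apply: N_normalize.
exists (C * N x) => t [ht hb].
have hte : ball N t (vscale t e) by rewrite /ball N_scale // he Rabs_right; lra.
by have := hCb _ _ (hb _ hte); rewrite N_scale // he Rabs_right; lra.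
Qed.

Lemma ball_sup_in_conv x y : x <> vzero d -> 0 < Rsup (radii x) ->
  N y <= Rsup (radii x) -> conv (Apm x) y.
Proof.
move=> hx hs hy; have [hub hlub] := radii_lub hx; set s := Rsup (radii x) in hs hy hub hlub.
pose t k := 1 - / INR k.+2.
have ht : forall k, 0 < t k < 1.
  move=> k; have h2 : 2 <= INR k.+2 by rewrite S_INR S_INR; have := pos_INR k; lra.
  have : / INR k.+2 <= / 2 by apply: Rinv_le_contravar; lra.
  by have := inv_pos k.+1; rewrite /t; lra.
apply: (@hull_closed d (Apm x) (apm_list x) (apm_listP x) t).
  rewrite -[1]Rminus_0_r; apply: CV_minus (cv_const 1) _.
  exact: (cv_sub (phi := S) (fun k => ltnSn k) cv_inv).
move=> k; have [ht0 ht1] := ht k.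
have hlt : N (vscale (t k) y) < s.
  rewrite N_scale // Rabs_right; last lra.
  by have := N_ge0 hN y; nra.
have [t' [ht' hlt']] : exists t', radii x t' /\ N (vscale (t k) y) < t'.
  apply: NNPP => hno; suff : s <= N (vscale (t k) y) by lra.
  by apply: hlub => t' ht'; apply: Rnot_lt_le => hlt'; apply: hno; exists t'.
by apply: (proj2 ht'); rewrite /ball; lra.
Qed.
End Radii.

(* Positivity of chi_p(A): this is where irreducibility and p >= d - 1 enter. *)
Section ChiPositive.
Variables (d r : nat) (A : 'I_r -> Mat d) (N : Vec d -> R) (p : nat).
Hypotheses (hN : is_norm N) (hirr : irreducible A) (hp : (d - 1 <= p)%nat).

Lemma radius_near x : x <> vzero d ->
  exists2 rho0, 0 < rho0 & exists2 delta, 0 < delta &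
    forall y, l1 (vsub y x) <= rho0 -> radii A N p y delta.
Proof.
move=> hx; have [rho0 hr [K hK hsolve]] := krylov_local_solve hirr hx hp.
have [c hc hcl] := N_l1_lower hN.
exists rho0 => //; exists (c / (K + 1)); first by apply: Rdiv_lt_0_compat; lra.
move=> y hy; split; first by apply: Rlt_le; apply: Rdiv_lt_0_compat; lra.
move=> z hz; have [a [ha hal]] := hsolve y hy (rv z).
apply: (conv_of_coef ha); apply: Rle_trans hal _; rewrite rl1_rv.
have hz' : c * l1 z <= c / (K + 1) := Rle_trans _ _ _ (hcl z) hz.
have hlz : l1 z <= / (K + 1) by apply: (Rmult_le_reg_l c) => //; rewrite /Rdiv in hz'.
have hinv : K * / (K + 1) <= 1.
  by apply: (Rmult_le_reg_l (K + 1)); [lra | rewrite -Rmult_assoc (Rmult_comm _ K) Rmult_assoc Rinv_r; lra].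
by have := Rmult_le_compat_l _ _ _ hK hlz; lra.
Qed.

(* By compactness of the unit sphere, the radii are bounded away from 0. *)
Lemma radii_lower :
  exists2 delta, 0 < delta & forall x, N x = 1 -> delta <= Rsup (radii A N p x).
Proof.
apply: NNPP => hno.
have hbad : forall j : nat, exists x, N x = 1 /\ Rsup (radii A N p x) < / INR j.+1.
  move=> j; apply: NNPP => hj; apply: hno; exists (/ INR j.+1); first exact: inv_pos.
  by move=> x hx1; apply: Rnot_lt_le => hlt; apply: hj; exists x.
have [x hxj] := choice _ hbad.
have [c hc hcl] := N_l1_lower hN.
have hb : forall k i, Rabs (x k i) <= / c.
  move=> k i; apply: Rle_trans (l1_coord _ i) _; apply: (Rmult_le_reg_l c) => //.
  by rewrite Rinv_r; [rewrite -(proj1 (hxj k)); apply: hcl | lra].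
have [phi hphi [l hl]] := bw_vec hb.
have hNl : N l = 1.
  apply: (UL_sequence _ _ _ (N_cv hN hl)).
  by apply: (cv_ext (u := fun _ => 1)) (cv_const 1) => k; rewrite (proj1 (hxj _)).
have hl0 : l <> vzero d by move=> e; move: hNl; rewrite e N_zero //; lra.
have [rho0 hr [delta hd hT]] := radius_near hl0.
have [K1 hK1] := cv_l1 hl hr.
have [K2 hK2] := inv_small hd.
pose k := maxn K1 K2.
have hk1 : l1 (vsub (x (phi k)) l) <= rho0.
  have := hK1 k (leP (leq_maxl _ _)); rewrite /R_dist Rminus_0_r => hK.
  exact: Rle_trans (Rle_abs _) (Rlt_le _ _ hK).
have hxk0 : x (phi k) <> vzero d by move=> e; have := proj1 (hxj (phi k)); rewrite e N_zero //; lra.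
have [hub _] := radii_lub A p hN hxk0.
have := hub _ (hT _ hk1); have := proj2 (hxj (phi k)).
by have := hK2 (phi k) (leq_trans (leq_maxr K1 K2) (incr_ge hphi k)); lra.
Qed.

(* Given any nonzero vector (so that the unit sphere is nonempty),
   chi_p(A) > 0 and chi_p(A) <= sup (radii x) for every unit x. *)
Lemma chi_bounds e0 : e0 <> vzero d ->
  0 < chi N A p /\ forall x, N x = 1 -> chi N A p <= Rsup (radii A N p x).
Proof.
move=> he0; have [delta hd hdel] := radii_lower; rewrite chiE; split.
  apply: Rlt_le_trans hd _; apply: Rinf_ge.
    by exists (Rsup (radii A N p (vscale (/ N e0) e0))), (vscale (/ N e0) e0); split => //; apply: N_normalize.
  by move=> z [x [hx ->]]; apply: hdel.
move=> x hx; apply: Rinf_le; last by exists x.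
by exists delta => z [x' [hx' ->]]; apply: hdel.
Qed.
End ChiPositive.

Lemma eta_facts (mu : R) (n p : nat) : 1 < mu -> (1 <= n)%nat ->
  1 <= Rpower mu (/ INR (n + p)) /\ Rpower mu (/ INR (n + p)) ^ (n + p) = mu.
Proof.
move=> hmu hn; have hI : 0 < INR (n + p) by apply: lt_0_INR; apply/ltP; apply: leq_trans hn (leq_addr _ _).
split.
  rewrite -{1}(Rpower_O mu); last lra.
  by apply: Rle_Rpower; [lra | apply: Rlt_le; apply: Rinv_0_lt_compat].
rewrite -Rpower_pow; last by rewrite /Rpower; apply: exp_pos.
by rewrite Rpower_mult Rinv_l; [apply: Rpower_1; lra | lra].
Qed.

Lemma growth_ineq (mu rho : R) (n p q : nat) : 1 < mu -> (1 <= n)%nat -> 0 < rho -> (q <= p)%nat ->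
  (Rpower mu (/ INR (n + p)) * rho) ^ (q + n) <= mu * Rmax 1 (rho ^ p) * rho ^ n.
Proof.
move=> hmu hn hr hq; have [he1 he2] := eta_facts p hmu hn.
set eta := Rpower mu (/ INR (n + p)) in he1 he2 *.
rewrite Rpow_mult_distr (pow_add rho) -Rmult_assoc.
have h1 : eta ^ (q + n) <= mu.
  by rewrite -he2; apply: Rle_pow => //; apply/leP; rewrite addnC leq_add2l.
have h2 : rho ^ q <= Rmax 1 (rho ^ p).
  case: (Rle_lt_dec 1 rho) => h.
    by apply: Rle_trans (Rmax_r _ _); apply: Rle_pow => //; apply/leP.
  by apply: Rle_trans (Rmax_l _ _); rewrite -(pow1 q); apply: pow_incr; lra.
apply: Rmult_le_compat_r; first by apply: pow_le; lra.
by apply: Rmult_le_compat => //; apply: pow_le; lra.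
Qed.

Section OneStep.
Variables (d r : nat) (A : 'I_r -> Mat d) (N : Vec d -> R) (p n : nat) (mu : R).
Variables (w : list 'I_r) (xs : Vec d).
Hypotheses (hirr : irreducible A) (hN : is_norm N) (hp : (d - 1 <= p)%nat) (hn : (1 <= n)%nat).
Hypotheses (hmu : 1 < mu) (hw : length w = n) (hxs : xs <> vzero d).
Hypothesis hyp : N (act A w xs) >= mu * eta_p N A p * jsr N A ^ n * N xs.
Hypothesis hrho : 0 < jsr N A.

Lemma rescaled_growth :
  let y := vscale (chi N A p / N xs) xs in
  N y = chi N A p /\ mu * Rmax 1 (jsr N A ^ p) * jsr N A ^ n <= N (act A w y).
Proof.
have [hc _] := chi_bounds hN hirr hp hxs; have hnxs := N_neq0 hN hxs.
have hcn : 0 < chi N A p / N xs by apply: Rdiv_lt_0_compat.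
rewrite /= act_scale !N_scale // Rabs_right; last by apply: Rle_ge; apply: Rlt_le.
split; first by field; lra.
have := Rmult_le_compat_l _ _ _ (Rlt_le _ _ hcn) (Rge_le _ _ hyp).
have -> // : chi N A p / N xs * (mu * eta_p N A p * jsr N A ^ n * N xs) =
             mu * Rmax 1 (jsr N A ^ p) * jsr N A ^ n.
by rewrite /eta_p; field; lra.
Qed.

(* For every unit vector u, some word G of length <= p followed by w
   amplifies u by at least mu max(1, rho^p) rho^n: the rescaled x* lies in
   conv (Apm u), and w maps it to a convex combination of the points +-w G u,
   one of which is at least as large. *)
Lemma amplified_point u : N u = 1 ->
  exists2 q : list 'I_r, (length q <= p)%nat &
    mu * Rmax 1 (jsr N A ^ p) * jsr N A ^ n <= N (act A (q ++ w) u).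
Proof.
move=> hu; have hu0 : u <> vzero d by move=> e; move: hu; rewrite e N_zero //; lra.
have [hc hcx] := chi_bounds hN hirr hp hxs; have hcs := hcx u hu.
have [hNy hgrow] := rescaled_growth; set y := vscale _ xs in hNy hgrow.
have [l [hl0 [hl1 hly]]] : conv (Apm A p u) y.
  by apply: (ball_sup_in_conv hN hu0 (Rlt_le_trans _ _ _ hc hcs)); rewrite hNy.
set l' := map (fun cv => (cv.1, act A w cv.2)) l.
have [cv' /in_map_iff [cv [ecv hcv]] hle] : exists2 cv, In cv l' & N (wsum l') <= N cv.2.
  apply: wsum_dominated => //; last by rewrite /l' -map_comp.
  by move=> cv /in_map_iff [cv0 [<- h]] /=; apply: (proj1 (hl0 _ h)).
have hwy : N (act A w y) <= N (act A w cv.2).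
  by rewrite hly act_wsum -/l'; apply: Rle_trans hle _; rewrite -ecv; apply: Rle_refl.
case: (proj2 (hl0 cv hcv)) => [[q [hq hcvq]]|[q [hq hcvq]]]; exists q => //;
  apply: Rle_trans hgrow _; apply: Rle_trans hwy _; rewrite hcvq act_cat ?act_opp ?N_opp //; lra.
Qed.

Lemma one_step x : x <> vzero d -> exists F : list 'I_r, (1 <= length F)%nat /\
  (Rpower mu (/ INR (n + p)) * jsr N A) ^ length F * N x <= N (act A F x).
Proof.
move=> hx; have hnx := N_neq0 hN hx.
have [q hq hamp] := amplified_point (N_normalize hN hx).
exists (q ++ w); have hlen : length (q ++ w) = (length q + n)%nat.
  by rewrite !length_size size_cat -!length_size hw.
split; first by rewrite hlen; apply: leq_trans hn (leq_addl _ _).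
have hxe : x = vscale (N x) (vscale (/ N x) x).
  by apply: vext => i; rewrite /vscale; field; lra.
rewrite {2}hxe act_scale N_scale // Rabs_right; last lra.
rewrite hlen Rmult_comm; apply: Rmult_le_compat_l; first lra.
by apply: Rle_trans hamp; apply: growth_ineq.
Qed.
End OneStep.

Definition growing_words d r (A : 'I_r -> Mat d) (N : Vec d -> R) (a : R) (H : nat -> list 'I_r) :=
  (forall k, (1 <= length (H k))%nat) /\
  (forall M : nat, exists K : nat, forall k, (K <= k)%nat -> (M <= length (H k))%nat) /\
  (forall k, opnorm N (act A (H k)) >= a ^ length (H k)).

Section Growing.
Variables (d r : nat) (A : 'I_r -> Mat d) (N : Vec d -> R).
Hypothesis hN : is_norm N.

Lemma growing_of_lengths (a : R) (H : nat -> list 'I_r) :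
  (forall k, (k < length (H k))%nat /\ a ^ length (H k) <= opnorm N (act A (H k))) ->
  growing_words A N a H.
Proof.
move=> hH; split; [|split].
- by move=> k; apply: leq_trans (proj1 (hH k)).
- by move=> M; exists M => k hk; apply: leq_trans hk (ltnW (proj1 (hH k))).
- by move=> k; apply: Rle_ge; apply: (proj2 (hH k)).
Qed.

(* Iterating a one-step amplification at rate a > 0 from x0 <> 0, by
   appending to the current word a word that amplifies its image. *)
Lemma growing_of_step (a : R) (x0 : Vec d) : 0 < a -> x0 <> vzero d ->
  (forall x, x <> vzero d -> exists F : list 'I_r,
     (1 <= length F)%nat /\ a ^ length F * N x <= N (act A F x)) ->
  exists H, growing_words A N a H.
Proof.
move=> ha hx0 hstep; have hnx0 := N_neq0 hN hx0.
have [F hF] : exists F : Vec d -> list 'I_r, forall x, x <> vzero d ->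
    (1 <= length (F x))%nat /\ a ^ length (F x) * N x <= N (act A (F x) x).
  apply: (choice (fun (x : Vec d) (F : list 'I_r) => x <> vzero d ->
    (1 <= length F)%nat /\ a ^ length F * N x <= N (act A F x))) => x.
  by case: (classic (x = vzero d)) => [-> | /hstep [F hF]]; [exists nil | exists F].
pose fix H k := if k is k'.+1 then H k' ++ F (act A (H k') x0) else F x0.
have hH : forall k, (k < length (H k))%nat /\ a ^ length (H k) * N x0 <= N (act A (H k) x0).
  elim=> [|k [IHl IHn]] /=; first by apply: hF.
  have hk0 : act A (H k) x0 <> vzero d.
    by move=> e; rewrite e N_zero // in IHn; have := pow_lt _ (length (H k)) ha; nra.
  have [hFl hFn] := hF _ hk0.
  rewrite !length_size size_cat -!length_size pow_add act_cat; split.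
    by rewrite -addn1; apply: leq_add.
  apply: Rle_trans hFn; have haF : 0 <= a ^ length (F (act A (H k) x0)) by apply: pow_le; lra.
  by have := Rmult_le_compat_l _ _ _ haF IHn; lra.
exists H; apply: growing_of_lengths => k; split; first exact: (proj1 (hH k)).
apply: (Rmult_le_reg_r (N x0)) => //; apply: Rle_trans (proj2 (hH k)) _.
have := opnorm_ge A (H k) hN hx0; rewrite /Rdiv => h.
by have := Rmult_le_compat_r _ _ _ (Rlt_le _ _ hnx0) h; rewrite Rmult_assoc Rinv_l; lra.
Qed.

(* With a nonpositive rate, any words of odd length work, since operator
   norms are nonnegative while a^(2k+1) <= 0. *)
Lemma growing_nonpositive (a : R) (i0 : 'I_r) (x0 : Vec d) : a <= 0 -> x0 <> vzero d ->
  exists H, growing_words A N a H.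
Proof.
move=> ha hx0; exists (fun k => nseq (k + k).+1 i0); apply: growing_of_lengths => k.
rewrite length_size size_nseq; split; first by rewrite ltnS leq_addr.
apply: Rle_trans (opnorm_ge A _ hN hx0); apply: Rle_trans (_ : 0 <= _).
  have hsq : 0 <= (a * a) ^ k by apply: pow_le; nra.
  by rewrite /= pow_add -Rpow_mult_distr; nra.
by apply: Rmult_le_pos; [apply: N_ge0 | apply: Rlt_le; apply: Rinv_0_lt_compat; apply: N_neq0].
Qed.
End Growing.

Theorem lemma4 (d r : nat) (A : 'I_r -> Mat d) (N : Vec d -> R)
  (p n : nat) (mu : R) (w : list 'I_r) (xs : Vec d) :
  irreducible A -> is_norm N ->
  (d - 1 <= p)%nat -> (1 <= n)%nat -> 1 < mu ->
  length w = n -> xs <> vzero d ->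
  N (act A w xs) >= mu * eta_p N A p * jsr N A ^ n * N xs ->
  let eta := Rpower mu (/ INR (n + p)) in
  exists H : nat -> list 'I_r,
    (forall k, (1 <= length (H k))%nat) /\
    (forall M : nat, exists K : nat, forall k, (K <= k)%nat -> (M <= length (H k))%nat) /\
    (forall k, opnorm N (act A (H k)) >= (eta * jsr N A) ^ length (H k)).
Proof.
move=> hirr hN hp hn hmu hw hxs hyp eta.
have heta : 0 < eta by apply: exp_pos.
case: (Rle_lt_dec (jsr N A) 0) => hrho.
  case: w hw {hyp} => [|i0 w'] hw; first by move: hn; rewrite -hw.
  by apply: (growing_nonpositive A hN i0 _ hxs); nra.
apply: (growing_of_step hN (Rmult_lt_0_compat _ _ heta hrho) hxs).
exact: one_step hirr hN hp hn hmu hw hxs hyp hrho.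
Qed.
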